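(* Let $N,M\ge1$, let $a_1,\dots,a_M\ge 2$ be real numbers, and for each $m=1,\dots,M$ let $i_m,j_m,k_m\in\{1,\dots,N\}$. Consider the system of inequalities in real variables $x_1,\dots,x_N$: $$a_m x_{i_m}\le x_{j_m}+x_{k_m}\quad (m=1,\dots,M),\qquad x_i>0\quad(i=1,\dots,N).$$ Let $\vec D$ be the digraph on vertex set $\{1,\dots,N\}$ which, for each $m$, contains the directed edges $(i_m,j_m)$ and $(i_m,k_m)$. If $\vec D$ is strongly connected, then the system is feasible if and only if $a_1=a_2=\cdots=a_M=2$, and in that case the feasible solutions are exactly those with $x_1=x_2=\cdots=x_N$. *)

From mathcomp Require Import all_boot all_order all_algebra.
Set Implicit Arguments. Unset Strict Implicit. Unset Printing Implicit Defensive.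
Import Order.TTheory GRing.Theory Num.Theory.
Local Open Scope ring_scope.

(* Indices 1..N are represented by 'I_N, constraints 1..M by 'I_M. *)

Definition feasible (R : realFieldType) (N M : nat) (a : 'I_M -> R)
  (i j k : 'I_M -> 'I_N) (x : 'I_N -> R) : Prop :=
  (forall m : 'I_M, a m * x (i m) <= x (j m) + x (k m)) /\
  (forall n : 'I_N, 0 < x n).

Definition sysedge (N M : nat) (i j k : 'I_M -> 'I_N) : rel 'I_N :=
  fun u v => [exists m : 'I_M, (i m == u) && ((j m == v) || (k m == v))].

Definition strongly_connected (T : finType) (e : rel T) : Prop :=
  forall u v : T, connect e u v.

From mathcomp Require Import all_boot all_order all_algebra.
From mathcomp Require Import lra.
Import Order.TTheory GRing.Theory Num.Theory.
Local Open Scope ring_scope.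

(* Let x be a feasible solution and let X be its maximal
   entry, attained at some vertex n0.  If a constraint m has x_{i_m} = X,
   then  2X <= a_m X <= x_{j_m} + x_{k_m} <= 2X  forces
   x_{j_m} = x_{k_m} = X and a_m = 2 (this is [max_constraint_tight]).
   Hence the set of vertices where x attains its maximum is closed under the
   edges of the digraph D; by strong connectivity it is all of {1..N}
   ([closed_connect]), so x is constant and, looking at any constraint again,
   every a_m equals 2 ([feasible_const_tight]).  Conversely, when every
   a_m = 2, any positive constant vector satisfies all constraints with
   equality ([const_feasible]). *)

Lemma closed_connect (T : finType) (e : rel T) (P : pred T) :
  (forall u v, e u v -> P u -> P v) ->
  forall u v, connect e u v -> P u -> P v.
Proof.
move=> closedP u v /connectP [p] + ->.
elim: p u => [|w p IH] u //= /andP [euw pw] Pu.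
exact: IH pw (closedP _ _ euw Pu).
Qed.

Lemma max_constraint_tight (R : realFieldType) (a X y z : R) :
  0 < X -> 2 <= a -> y <= X -> z <= X -> a * X <= y + z ->
  [/\ y = X, z = X & a = 2].
Proof.
move=> X_gt0 a_ge2 y_le z_le ineq.
have twoX_le : 2 * X <= a * X by rewrite ler_pM2r.
have aX_le : a * X <= 2 * X by lra.
split; [lra | lra |].
by apply/eqP; rewrite eq_le -(ler_pM2r X_gt0) aX_le a_ge2.
Qed.

Section FeasibleSolutions.

Variables (R : realFieldType) (N M : nat).
Variables (a : 'I_M -> R) (i j k : 'I_M -> 'I_N).
Hypothesis a_ge2 : forall m, 2 <= a m.
Hypothesis strong : strongly_connected (sysedge i j k).

Lemma feasible_const_tight (x : 'I_N -> R) : (1 <= N)%N ->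
  feasible a i j k x -> (forall n n', x n = x n') /\ (forall m, a m = 2).
Proof.
move=> N_gt0 [ineq x_pos].
have [n0 _ is_max] := @arg_maxP _ _ _ (Ordinal N_gt0) xpredT x erefl.
set X := x n0 in is_max.
have x_le n : x n <= X by apply: is_max.
have tight m : x (i m) = X -> [/\ x (j m) = X, x (k m) = X & a m = 2].
  move=> xi_max; apply: max_constraint_tight; rewrite ?x_le ?x_pos //.
  by rewrite -xi_max; apply: ineq.
have max_closed u v : sysedge i j k u v -> x u == X -> x v == X.
  case/existsP=> m /andP [/eqP iu jkv] /eqP xu.
  have [xj xk _] := tight m (etrans (congr1 x iu) xu).
  by case/orP: jkv => /eqP <-; rewrite ?xj ?xk.
have x_max n : x n = X.
  have := @closed_connect _ _ [pred v | x v == X] max_closed _ _ (strong n0 n).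
  by rewrite /= eqxx => /(_ isT) /eqP.
by split=> [n n' | m]; [rewrite !x_max | case: (tight m (x_max _))].
Qed.

End FeasibleSolutions.

Lemma const_feasible (R : realFieldType) (N M : nat) (a : 'I_M -> R)
  (i j k : 'I_M -> 'I_N) (x : 'I_N -> R) :
  (forall m, a m = 2) -> (forall n, 0 < x n) -> (forall n n', x n = x n') ->
  feasible a i j k x.
Proof.
move=> a2 x_pos x_const; split=> // m.
by rewrite a2 (x_const (j m) (i m)) (x_const (k m) (i m)); lra.
Qed.

Theorem lemma2p3 (R : realFieldType) (N M : nat) (hN : (1 <= N)%N) (hM : (1 <= M)%N)
  (a : 'I_M -> R) (ha : forall m, 2 <= a m) (i j k : 'I_M -> 'I_N)
  (hD : strongly_connected (sysedge i j k)) :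
  ((exists x : 'I_N -> R, feasible a i j k x) <-> (forall m, a m = 2)) /\
  ((forall m, a m = 2) ->
     forall x : 'I_N -> R,
       feasible a i j k x <-> ((forall n, 0 < x n) /\ (forall n n', x n = x n'))).
Proof.
have solution_props x := @feasible_const_tight R N M a i j k ha hD x hN.
split; first split.
- by case=> x /solution_props [].
- by move=> a2; exists (fun=> 1); apply: const_feasible.
- move=> a2 x; split=> [feas | [x_pos x_const]].
  + by split; [case: feas | case: (solution_props x feas)].
  + exact: const_feasible.
Qed.
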